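(* Let $(x,y)$ be a $\delta$-feasible assignment, let $\mathcal{F}$ be an acyclic $y$-flow from $S$ to $T$ (with respect to $(x,y)$), and let $(x',y')$ be the result of chain shifting $(x,y)$ according to $\mathcal{F}$. Let $d$ be the largest value of $\mathrm{dist}_G(u,w)$ over arcs $(u,w)$ of $G_{\mathcal{F}}$. Then $(x',y')$ is $(\delta+d)$-feasible; every vertex $v$ of indegree zero in $G_{\mathcal{F}}$ satisfies $\mathrm{radius}_{(x',y')}(v)\le\mathrm{radius}_{(x,y)}(v)$; every other vertex $v$ satisfies $\mathrm{radius}_{(x',y')}(v)\le\max\big(\mathrm{radius}_{(x,y)}(v),\ \max_{a\in N^{in}_{G_\mathcal{F}}(v)}(\mathrm{radius}_{(x,y)}(a)+\mathrm{dist}_G(a,v))\big)$; and $y'_v=y_v$ for every $v\in V\setminus(S\cup T)$.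
   Context: $G=(V,E)$ undirected unweighted, $\mathrm{dist}_G$ shortest-path distance, $L:V\to\mathbb{N}$, $k$ a positive integer. An assignment is $x:V\times V\to\mathbb{R}_{\ge0}$, $y:V\to\mathbb{R}_{\ge0}$; it is $\delta$-feasible if (1) $\sum_u y_u=k$; (2) $x_{u,v}\le y_u$; (3) $\sum_v x_{u,v}\le L(u)y_u$; (4) $\sum_u x_{u,v}=1$; (5) $0\le y_u\le1$; (6) $x_{u,v}=0$ whenever $\mathrm{dist}_G(u,v)>\delta$; (7) $x_{u,v}\ge0$. $\mathrm{radius}_{(x,y)}(u)$ is the largest integer $i$ such that some $v$ has $\mathrm{dist}_G(v,u)=i$ and $x_{u,v}>0$ ($0$ if none). $y$-flow: for an assignment $(x,y)$ and disjoint $S,T\subseteq V$, a $y$-flow from $S$ to $T$ is a finite collection $\mathcal{F}$ of paths $(\alpha,v_1,\dots,v_t)$ with $\alpha>0$ real, $v_1\in S$, $v_t\in T$, $L(v_1)\le L(v_t)$, and for $2\le i\le t-1$: $v_i\notin S\cup T$, $y_{v_i}=1$, $L(v_i)\ge L(v_1)$ (such a path transfers $\alpha$ from $v_1$ to $v_t$ through $v_2,\dots,v_{t-1}$), such that: for each $v\in S$ the total amount transferred from $v$ is at most $y_v$; for each $v\in T$ the total transferred to $v$ is at most $1-y_v$; for each $v\notin S\cup T$ the total transferred through $v$ is at most $1$. $G_{\mathcal{F}}=(V,A)$ is the directed graph with arc $(u,w)$ iff some path of $\mathcal{F}$ contains $u,w$ as consecutive vertices in this order; $\mathcal{F}$ is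 acyclic iff $G_{\mathcal{F}}$ is acyclic. $f_{\mathcal{F}}(u,w)$ is the sum of $\alpha$ over paths containing $u,w$ consecutively; $fl_{\mathcal{F}}(u,w)$ is the sum of $L(v_1)\alpha$ over such paths $(\alpha,v_1,\dots)$. $N^{in}_{G_\mathcal{F}}(v)=\{u:(u,v)\in A\}$. Chain shifting of $(x,y)$ according to acyclic $\mathcal{F}$: set $\Delta_{u,v}=0$ for all $u,v$; for each arc $(u,a)\in A$ in reverse topological order of $G_\mathcal{F}$ and each $v\in V$, let $\Delta=x_{u,v}\,fl_\mathcal{F}(u,a)/(L(u)y_u)$ and set $\Delta_{a,v}\mathrel{+}=\Delta$, $\Delta_{u,v}\mathrel{-}=\Delta$; then set $x_{u,v}\mathrel{+}=\Delta_{u,v}$ for all $u,v$; for each $s\in S$ decrease $y_s$ by $\sum_{(s,u)\in A}f_\mathcal{F}(s,u)$; for each $t\in T$ increase $y_t$ by $\sum_{(u,t)\in A}f_\mathcal{F}(u,t)$. *)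

From HB Require Import structures.
From mathcomp Require Import all_boot all_order all_algebra.
From Stdlib Require Import ClassicalEpsilon.
Set Implicit Arguments. Unset Strict Implicit. Unset Printing Implicit Defensive.
Import Order.TTheory GRing.Theory Num.Theory.

Fixpoint walk (V : finType) (e : rel V) (n : nat) (u v : V) : bool :=
  match n with
  | 0 => u == v
  | n'.+1 => [exists w, e u w && walk e n' w v]
  end.

(* shortest-path distance; None encodes +infinity (v unreachable from u) *)
Definition dist (V : finType) (e : rel V) (u v : V) : option nat :=
  match excluded_middle_informative (exists n, walk e n u v) with
  | left H => Some (@ex_minn (fun n => walk e n u v) H)
  | right _ => None
  end.

Definition ext_gt (a b : option nat) : bool :=   (* a > b, None = oo *)
  match b with
  | None => false
  | Some b' => match a with None => true | Some a' => (b' < a')%N end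
  end.
Definition ole (n : nat) (b : option nat) : bool :=
  if b is Some m then (n <= m)%N else true.
Definition eadd (d : nat) (b : option nat) : option nat := omap (addn d) b.

Local Open Scope ring_scope.

Definition feasible (V : finType) (e : rel V) (R : realFieldType)
  (L : V -> nat) (k : nat) (delta : option nat)
  (x : V -> V -> R) (y : V -> R) : Prop :=
  [/\ \sum_(u : V) y u = k%:R,
      forall u v, x u v <= y u,
      forall u, \sum_(v : V) x u v <= (L u)%:R * y u,
      forall v, \sum_(u : V) x u v = 1 &
      [/\ forall u, 0 <= y u <= 1,
          forall u v, ext_gt (dist e u v) delta -> x u v = 0 &
          forall u v, 0 <= x u v]].

Definition radius (V : finType) (e : rel V) (R : realFieldType)
  (x : V -> V -> R) (u : V) : nat :=
  (\max_(v | (0 < x u v)%R && (dist e v u != None)) odflt 0%N (dist e v u))%N.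

(* ---------- y-flows.  A path (alpha, v_1, ..., v_t) is (alpha, (v_1, [v_2;...;v_t])) *)
Definition flowpath (V : finType) (R : realFieldType) := (R * (V * seq V))%type.

Section Flow.
Variables (V : finType) (R : realFieldType).
Implicit Types (p : flowpath V R) (F : seq (flowpath V R)).

Definition pfirst p : V := p.2.1.
Definition plast p : V := last p.2.1 p.2.2.
Definition pverts p : seq V := p.2.1 :: p.2.2.
(* v_2, ..., v_{t-1} *)
Definition pinterior p : seq V := behead (belast p.2.1 p.2.2).
Definition ppairs p : seq (V * V) := zip (pverts p) (behead (pverts p)).

Definition is_yflow (L : V -> nat) (y : V -> R) (S T : {set V}) F : Prop :=
  [/\ forall p, p \in F ->
        [/\ 0 < p.1, pfirst p \in S, plast p \in T,
            (L (pfirst p) <= L (plast p))%N &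
            forall v, v \in pinterior p ->
              [/\ v \notin S, v \notin T, y v = 1 & (L (pfirst p) <= L v)%N]],
      forall v, v \in S -> \sum_(p <- F | pfirst p == v) p.1 <= y v,
      forall v, v \in T -> \sum_(p <- F | plast p == v) p.1 <= 1 - y v &
      forall v, v \notin S -> v \notin T ->
        \sum_(p <- F) p.1 * (count_mem v (pinterior p))%:R <= 1].

Definition farc F : rel V := fun u w => has (fun p => (u, w) \in ppairs p) F.

Definition facyclic F : Prop := forall u w, farc F u w -> ~~ connect (farc F) w u.

Definition fflow F (u w : V) : R := \sum_(p <- F | (u, w) \in ppairs p) p.1.
Definition flflow (L : V -> nat) F (u w : V) : R :=
  \sum_(p <- F | (u, w) \in ppairs p) (L (pfirst p))%:R * p.1.

(* Delta is computed from the ORIGINAL x (x is only updated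
   at the end), so the accumulated Delta_{w,v} is the sum of the increments
   over arcs (u,w) minus the decrements over arcs (w,a). *)
Definition cs_x (L : V -> nat) (x : V -> V -> R) (y : V -> R) F (w v : V) : R :=
  x w v
  + \sum_(u : V | farc F u w) x u v * flflow L F u w / ((L u)%:R * y u)
  - \sum_(a : V | farc F w a) x w v * flflow L F w a / ((L w)%:R * y w).

Definition cs_y (y : V -> R) (S T : {set V}) F (t : V) : R :=
  if t \in S then y t - \sum_(u : V | farc F t u) fflow F t u
  else if t \in T then y t + \sum_(u : V | farc F u t) fflow F u t
  else y t.
End Flow.

(* d = largest dist_G(u,w) over arcs (u,w) of G_F (None = oo; 0 if no arcs) *)
Definition dmax (V : finType) (e : rel V) (R : realFieldType) (F : seq (flowpath V R))
  : option nat :=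
  if [forall u, forall w, farc F u w ==> (dist e u w != None)]
  then Some (\max_(uw : V * V | farc F uw.1 uw.2) odflt 0%N (dist e uw.1 uw.2))%N
  else None.

Definition rbound (V : finType) (e : rel V) (R : realFieldType)
  (x : V -> V -> R) (F : seq (flowpath V R)) (v : V) : option nat :=
  if [forall a, farc F a v ==> (dist e a v != None)]
  then Some (maxn (radius e x v)
                  (\max_(a | farc F a v) (radius e x a + odflt 0%N (dist e a v))))%N
  else None.

From HB Require Import structures.
From mathcomp Require Import all_boot all_order all_algebra.
From Stdlib Require Import ClassicalEpsilon.
From mathcomp Require Import ring zify.
Import Order.TTheory GRing.Theory Num.Theory.
Set Implicit Arguments. Unset Strict Implicit. Unset Printing Implicit Defensive.

(* Write cap(u) = L(u) y(u) for the capacity of u, fl(u,w) for the load-weighted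
   flow on the arc (u,w) of G_F and out(u) = sum_a fl(u,a).  Chain shifting
   replaces x by
       x'(w,v) = x(w,v) + sum_u x(u,v) fl(u,w) / cap(u) - x(w,v) out(w) / cap(w):
   every vertex w passes the fraction out(w)/cap(w) of each of its clients on
   along its out-arcs and receives the corresponding shares from its
   in-neighbours.  Path by path
     this yields out(u) <= cap(u), inflow <= outflow at internal vertices,
     "sources only send, sinks only receive", and the fact that the flow leaving
     S equals the flow entering T.
   - With these facts each of the seven feasibility conditions of (x', y') is a
     short calculation.  The distance and radius bounds follow from the support
     property: x'(w,v) > 0 forces x(w,v) > 0 or x(u,v) > 0 for an in-neighbour u
     of w, combined with the triangle inequality for dist_G. *)

(* The consecutive pairs of the sequence x :: mid ++ [:: z]; for a path of a
   y-flow, x is its source, mid its interior and z its sink. *)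
Section ChainPairs.
Variable A : eqType.
Implicit Types (x z u w a : A) (mid : seq A).

Definition chain x mid z : seq (A * A) := zip (x :: mid) (rcons mid z).

Lemma chain_src x mid z u w : (u, w) \in chain x mid z -> u \in x :: mid.
Proof.
elim: mid x => [|i mid IH] x; rewrite /chain /= => H.
  by move: H; rewrite !mem_seq1 => /eqP[->].
move: H; rewrite in_cons => /orP[/eqP[-> _]|]; first by rewrite eqxx.
by move/IH => ->; rewrite orbT.
Qed.

Lemma chain_dst x mid z u w : (u, w) \in chain x mid z -> w \in rcons mid z.
Proof.
elim: mid x => [|i mid IH] x; rewrite /chain /= => H.
  by move: H; rewrite !mem_seq1 => /eqP[_ ->].
move: H; rewrite in_cons => /orP[/eqP[_ ->]|]; first by rewrite eqxx.
by move/IH => ->; rewrite orbT.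
Qed.

Lemma chain_from_first x mid z a :
  x \notin mid -> ((x, a) \in chain x mid z) = (a == head z mid).
Proof.
case: mid => [|i mid] /=; first by rewrite /chain /= mem_seq1 xpair_eqE eqxx.
rewrite in_cons negb_or => /andP[xi xmid].
rewrite /chain /= in_cons xpair_eqE eqxx /=.
case: (boolP ((x, a) \in _)) => [/chain_src|]; last by rewrite orbF.
by rewrite in_cons (negbTE xmid) orbF => /eqP E; move: xi; rewrite E eqxx.
Qed.

Lemma chain_into_last x mid z u :
  z \notin mid -> ((u, z) \in chain x mid z) = (u == last x mid).
Proof.
elim: mid x => [|i mid IH] x /=; first by rewrite /chain /= mem_seq1 xpair_eqE eqxx andbT.
rewrite in_cons negb_or => /andP[zi zmid].
by rewrite /chain /= in_cons xpair_eqE (negbTE zi) andbF /=; exact: IH.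
Qed.

Lemma chain_succ x mid z w : w \in x :: mid -> exists a, (w, a) \in chain x mid z.
Proof.
elim: mid x => [|i mid IH] x /=.
  by rewrite mem_seq1 => /eqP->; exists z; rewrite /chain /= mem_seq1.
rewrite in_cons => /orP[/eqP->|/IH [a Ha]]; first by exists i; rewrite /chain /= mem_head.
by exists a; rewrite /chain /= in_cons Ha orbT.
Qed.

Lemma chain_pred_uniq x mid z u u' w : uniq (x :: rcons mid z) ->
  (u, w) \in chain x mid z -> (u', w) \in chain x mid z -> u = u'.
Proof.
elim: mid x => [|i mid IH] x /=.
  by rewrite /chain /= !mem_seq1 => _ /eqP[-> _] /eqP[-> _].
move=> /andP[_ U]; rewrite /chain /= !in_cons.
have fresh_i (v : A) : (v, i) \in chain i mid z -> False.
  by move/chain_dst; move: U => /andP[/negP Hn _].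
move=> /orP[/eqP[-> Ew]|H1] /orP[/eqP[-> Ew']|H2] //.
- by move: H2; rewrite Ew => /fresh_i.
- by move: H1; rewrite Ew' => /fresh_i.
- exact: IH U H1 H2.
Qed.

Lemma count_chain_src x mid z w :
  count (fun q => q.1 == w) (chain x mid z) = count_mem w (x :: mid).
Proof.
elim: mid x => [|i mid IH] x; first by rewrite /chain /= eq_sym.
by rewrite /chain /= -/(chain i mid z) IH /= eq_sym.
Qed.

Lemma zip_behead_chain x y r :
  zip (x :: y :: r) (y :: r) = chain x (belast y r) (last y r).
Proof. by rewrite /chain; elim: r x y => [|w r IH] x y //=; rewrite -IH. Qed.

End ChainPairs.

Section Distance.
Variables (V : finType) (e : rel V).

Lemma walk_cat n m u w v : walk e n u w -> walk e m w v -> walk e (n + m) u v.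
Proof.
elim: n u => [|n IH] u /=; first by move/eqP->.
move=> /existsP [w1 /andP [e1 H1]] H2; apply/existsP; exists w1.
by rewrite e1; exact: IH H1 H2.
Qed.

Lemma walk_rcons n u w v : walk e n u w -> e w v -> walk e n.+1 u v.
Proof.
elim: n u => [|n IH] u /=.
  by move/eqP-> => ewv; apply/existsP; exists v; rewrite ewv eqxx.
move=> /existsP [w1 /andP [e1 H1]] ewv; apply/existsP; exists w1.
by rewrite e1; exact: IH H1 ewv.
Qed.

Lemma dist_someP u v n : dist e u v = Some n ->
  walk e n u v /\ forall m, walk e m u v -> (n <= m)%N.
Proof.
rewrite /dist; case: excluded_middle_informative => // H [<-].
by case: ex_minnP.
Qed.

Lemma dist_noneP u v : dist e u v = None -> forall m, ~~ walk e m u v.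
Proof.
rewrite /dist; case: excluded_middle_informative => // H _ m.
by apply/negP => Hm; apply: H; exists m.
Qed.

Lemma dist_le_walk u v m : walk e m u v -> exists n, dist e u v = Some n /\ (n <= m)%N.
Proof.
case E: (dist e u v) => [n|] Hm; last by move: (dist_noneP E m); rewrite Hm.
by exists n; split => //; apply: (proj2 (dist_someP E)).
Qed.

Lemma dist_tri u w v a b : dist e u w = Some a -> dist e w v = Some b ->
  exists c, dist e u v = Some c /\ (c <= a + b)%N.
Proof. by move=> /dist_someP [H1 _] /dist_someP [H2 _]; exact: dist_le_walk (walk_cat H1 H2). Qed.

Hypothesis esym : symmetric e.

Lemma walk_rev n u v : walk e n u v -> walk e n v u.
Proof.
elim: n u v => [|n IH] u v /=; first by rewrite eq_sym.
move=> /existsP [w1 /andP [e1 H1]].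
by apply: walk_rcons (IH _ _ H1) _; rewrite esym.
Qed.

Lemma dist_sym u v : dist e u v = dist e v u.
Proof.
case E1: (dist e u v) => [n|]; case E2: (dist e v u) => [n'|] //.
- have [H1 M1] := dist_someP E1; have [H2 M2] := dist_someP E2.
  by congr Some; apply/eqP; rewrite eqn_leq M1 ?M2 // walk_rev.
- by have [H1 _] := dist_someP E1; move: (dist_noneP E2 n); rewrite walk_rev.
- by have [H2 _] := dist_someP E2; move: (dist_noneP E1 n'); rewrite walk_rev.
Qed.

End Distance.

Lemma path_zip (A : eqType) (e : rel A) x r :
  (forall q, q \in zip (x :: r) r -> e q.1 q.2) -> path e x r.
Proof.
elim: r x => [|z r IH] x //= H.
rewrite (H (x, z)) ?mem_head //=.
by apply: IH => q Hq; apply: H; rewrite /= in_cons Hq orbT.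
Qed.

Lemma acyclic_path_uniq (A : finType) (e : rel A) x r :
  (forall u w, e u w -> ~~ connect e w u) -> path e x r -> uniq (x :: r).
Proof.
move=> acyc; elim: r x => [|z r IH] x // /andP[exz pz].
rewrite cons_uniq (IH z pz) andbT.
by apply/negP => /(path_connect pz); apply/negP; exact: acyc.
Qed.

Local Open Scope ring_scope.

Lemma sum_indicator1 (A : finType) (R : numDomainType) (a0 : A) :
  \sum_(a : A) ((a == a0)%:R : R) = 1.
Proof. by rewrite (bigD1 a0) //= eqxx big1 ?addr0 // => a /negbTE ->. Qed.

Lemma sum_pair_indicator_le (A : finType) (R : numDomainType) (w : A) (l : seq (A * A)) :
  \sum_(a : A) (((w, a) \in l)%:R : R) <= (count (fun q => q.1 == w) l)%:R.
Proof.
elim: l => [|q l IH]; first by rewrite big1.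
apply: (@le_trans _ _ (\sum_(a : A) ((((w, a) == q)%:R : R) + ((w, a) \in l)%:R))).
  apply: ler_sum => a _; rewrite in_cons.
  by case: ((w,a) == q); case: ((w,a) \in l); rewrite /= ?addr0 ?add0r ?lerDl.
rewrite big_split /= natrD lerD //.
case: q => q1 q2 /=; case: (eqVneq q1 w) => [->|ne].
  by rewrite (eq_bigr (fun a => (a == q2)%:R)) ?sum_indicator1 // => a _; rewrite xpair_eqE eqxx.
by rewrite big1 // => a _; rewrite xpair_eqE eq_sym (negbTE ne).
Qed.

Section YFlow.
Variables (V : finType) (R : realFieldType) (L : V -> nat) (y : V -> R)
  (S T : {set V}) (F : seq (flowpath V R)).
Hypothesis disST : [disjoint S & T].
Hypothesis yflowF : is_yflow L y S T F.
Hypothesis acycF : facyclic F.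
Hypothesis y01 : forall u, 0 <= y u <= 1.

Definition step (p : flowpath V R) u w : R := ((u, w) \in ppairs p)%:R.

Lemma yflow_pathP p : p \in F ->
  [/\ 0 < p.1, pfirst p \in S, plast p \in T, (L (pfirst p) <= L (plast p))%N &
      forall v, v \in pinterior p ->
        [/\ v \notin S, v \notin T, y v = 1 & (L (pfirst p) <= L v)%N]].
Proof. by case: yflowF => H _ _ _; apply: H. Qed.

Lemma yflow_path_shape p : p \in F -> exists x0 mid z,
  [/\ pfirst p = x0, pinterior p = mid, plast p = z,
      ppairs p = chain x0 mid z & uniq (x0 :: rcons mid z)].
Proof.
move=> pF; have [_ pS pT _ _] := yflow_pathP pF.
case: p pF pS pT => a [x0 [|y0 r]] pF /=; rewrite /pfirst /plast /=.
  by move=> pS pT; move: (disjointFr disST pS); rewrite pT.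
move=> _ _; exists x0, (belast y0 r), (last y0 r); split => //.
  by rewrite /ppairs /pverts /= -zip_behead_chain.
rewrite -(lastI y0 r) -cons_uniq; apply: acyclic_path_uniq; first exact: acycF.
by apply: path_zip => -[q1 q2] Hq /=; apply/hasP; exists (a, (x0, y0 :: r)).
Qed.

Lemma step_src p u w : p \in F -> (u, w) \in ppairs p ->
  u = pfirst p \/ u \in pinterior p.
Proof.
move=> pF; have [x0 [mid [z [-> -> _ -> _]]]] := yflow_path_shape pF.
by move/chain_src; rewrite in_cons => /orP[/eqP->|]; [left|right].
Qed.

Lemma step_dst p u w : p \in F -> (u, w) \in ppairs p ->
  w = plast p \/ w \in pinterior p.
Proof.
move=> pF; have [x0 [mid [z [_ -> -> -> _]]]] := yflow_path_shape pF.
by move/chain_dst; rewrite mem_rcons in_cons => /orP[/eqP->|]; [left|right].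
Qed.

Lemma steps_from_source p s : p \in F -> s \in S ->
  \sum_(a : V) step p s a = (pfirst p == s)%:R.
Proof.
move=> pF sS; have [_ pS _ _ Hmid] := yflow_pathP pF.
have [x0 [mid [z [E1 E2 _ E4 _]]]] := yflow_path_shape pF.
rewrite /step E4 E1.
have x0mid : x0 \notin mid by apply/negP; rewrite -E2 => /Hmid [] /negP; rewrite -E1 pS.
case: (eqVneq x0 s) => [<-|ne].
  rewrite (eq_bigr (fun a => (a == head z mid)%:R)) ?sum_indicator1 // => a _.
  by rewrite chain_from_first.
apply: big1 => a _; case H: ((s, a) \in _) => //; move: H => /chain_src.
by rewrite in_cons eq_sym (negbTE ne) -E2 => /Hmid [] /negP; rewrite sS.
Qed.

Lemma steps_into_sink p t : p \in F -> t \in T ->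
  \sum_(u : V) step p u t = (plast p == t)%:R.
Proof.
move=> pF tT; have [_ _ pT _ Hmid] := yflow_pathP pF.
have [x0 [mid [z [_ E2 E3 E4 _]]]] := yflow_path_shape pF.
rewrite /step E4 E3.
have zmid : z \notin mid by apply/negP; rewrite -E2 => /Hmid [] _ /negP; rewrite -E3 pT.
case: (eqVneq z t) => [<-|ne].
  rewrite (eq_bigr (fun u => (u == last x0 mid)%:R)) ?sum_indicator1 // => u _.
  by rewrite chain_into_last.
apply: big1 => u _; case H: ((u, t) \in _) => //; move: H => /chain_dst.
by rewrite mem_rcons in_cons eq_sym (negbTE ne) -E2 => /Hmid [] _ /negP; rewrite tT.
Qed.

Lemma steps_in_le_out p w : p \in F -> w \notin S -> w \notin T ->
  \sum_(u : V) step p u w <= \sum_(a : V) step p w a.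
Proof.
move=> pF wS wT; have [_ _ pT _ _] := yflow_pathP pF.
have [x0 [mid [z [_ _ E3 E4 U]]]] := yflow_path_shape pF.
rewrite /step E4.
case: (pickP (fun u => (u, w) \in chain x0 mid z)) => [u0 Hu0|Hn]; last first.
  by rewrite big1 ?sumr_ge0 // => u _; rewrite Hn.
have -> : \sum_(u : V) (((u, w) \in chain x0 mid z)%:R : R) = 1.
  rewrite (eq_bigr (fun u => (u == u0)%:R)) ?sum_indicator1 // => u _.
  case H: ((u, w) \in _).
    by rewrite (chain_pred_uniq U H Hu0) eqxx.
  by case: eqP H => // ->; rewrite Hu0.
have wmid : w \in x0 :: mid.
  move: (chain_dst Hu0); rewrite mem_rcons in_cons => /orP[/eqP E|H].
    by move: wT; rewrite E -E3 pT.
  by rewrite in_cons H orbT.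
have [a0 Ha0] := chain_succ z wmid.
by rewrite (bigD1 a0) //= Ha0 lerDl sumr_ge0 // => a _; exact: ler0n.
Qed.

Lemma steps_out_le_count p w : p \in F -> w \notin S ->
  \sum_(a : V) step p w a <= (count_mem w (pinterior p))%:R.
Proof.
move=> pF wS; have [_ pS _ _ _] := yflow_pathP pF.
have [x0 [mid [z [E1 E2 _ E4 _]]]] := yflow_path_shape pF.
rewrite /step E4 E2; apply: le_trans (sum_pair_indicator_le _ w _) _.
rewrite count_chain_src /= ler_nat.
by have -> : (x0 == w) = false by apply/negP => /eqP E; move: wS; rewrite -E -E1 pS.
Qed.

Lemma step_into_source p u s : p \in F -> s \in S -> step p u s = 0.
Proof.
move=> pF sS; have [_ _ pT _ Hmid] := yflow_pathP pF.
rewrite /step; case H: (_ \in _) => //.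
case: (step_dst pF H) => [E|/Hmid [] /negP //].
by move: (disjointFr disST sS); rewrite E pT.
Qed.

Lemma step_out_of_sink p t a : p \in F -> t \in T -> step p t a = 0.
Proof.
move=> pF tT; have [_ pS _ _ Hmid] := yflow_pathP pF.
rewrite /step; case H: (_ \in _) => //.
case: (step_src pF H) => [E|/Hmid [] _ /negP //].
by move: (disjointFr disST pS); rewrite -E tT.
Qed.

Lemma step_off_arc p u w : p \in F -> ~~ farc F u w -> step p u w = 0.
Proof.
move=> pF /hasPn H; rewrite /step; case E: (_ \in _) => //.
by move: (H p pF); rewrite E.
Qed.

Lemma fflowE u w : fflow F u w = \sum_(p <- F) p.1 * step p u w.
Proof.
rewrite /fflow big_mkcond; apply: eq_bigr => p _.
by rewrite /step; case: ((u, w) \in _); rewrite ?mulr1 ?mulr0.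
Qed.

Lemma flflowE u w :
  flflow L F u w = \sum_(p <- F) (L (pfirst p))%:R * p.1 * step p u w.
Proof.
rewrite /flflow big_mkcond; apply: eq_bigr => p _.
by rewrite /step; case: ((u, w) \in _); rewrite ?mulr1 ?mulr0.
Qed.

Lemma fflow_ge0 u w : 0 <= fflow F u w.
Proof.
rewrite fflowE big_seq; apply: sumr_ge0 => p pF.
by have [H _ _ _ _] := yflow_pathP pF; rewrite mulr_ge0 ?ler0n // ltW.
Qed.

Lemma flflow_ge0 u w : 0 <= flflow L F u w.
Proof.
rewrite flflowE big_seq; apply: sumr_ge0 => p pF.
by have [H _ _ _ _] := yflow_pathP pF; rewrite !mulr_ge0 ?ler0n // ltW.
Qed.

Lemma fflow_off_arc u w : ~~ farc F u w -> fflow F u w = 0.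
Proof. by move=> nf; rewrite fflowE big1_seq // => p /andP[_ pF]; rewrite step_off_arc ?mulr0. Qed.

Lemma flflow_off_arc u w : ~~ farc F u w -> flflow L F u w = 0.
Proof. by move=> nf; rewrite flflowE big1_seq // => p /andP[_ pF]; rewrite step_off_arc ?mulr0. Qed.

Lemma flflow_into_source u s : s \in S -> flflow L F u s = 0.
Proof. by move=> sS; rewrite flflowE big1_seq // => p /andP[_ pF]; rewrite step_into_source ?mulr0. Qed.

Lemma flflow_out_of_sink t a : t \in T -> flflow L F t a = 0.
Proof. by move=> tT; rewrite flflowE big1_seq // => p /andP[_ pF]; rewrite step_out_of_sink ?mulr0. Qed.

(* Every vertex of a path has L at least that of the path's source, so the
   load on an arc is at most L(tail), resp. L(head) for an arc into a sink,
   times the flow on it. *)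
Lemma flflow_le u w : flflow L F u w <= (L u)%:R * fflow F u w.
Proof.
rewrite flflowE fflowE mulr_sumr !big_seq; apply: ler_sum => p pF.
have [p0 _ _ _ Hmid] := yflow_pathP pF.
rewrite /step; case H: (_ \in _); last by rewrite !mulr0.
rewrite !mulr1 ler_pM2r // ler_nat.
by case: (step_src pF H) => [->//|/Hmid []].
Qed.

Lemma flflow_into_sink_le u t : t \in T -> flflow L F u t <= (L t)%:R * fflow F u t.
Proof.
move=> tT; rewrite flflowE fflowE mulr_sumr !big_seq; apply: ler_sum => p pF.
have [p0 _ _ Hle Hmid] := yflow_pathP pF.
rewrite /step; case H: (_ \in _); last by rewrite !mulr0.
rewrite !mulr1 ler_pM2r // ler_nat.
by case: (step_dst pF H) => [->|/Hmid [] _ /negP //].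
Qed.

Lemma flflow_out_of_source s a : s \in S -> flflow L F s a = (L s)%:R * fflow F s a.
Proof.
move=> sS; rewrite flflowE fflowE mulr_sumr !big_seq; apply: eq_bigr => p pF.
have [_ _ _ _ Hmid] := yflow_pathP pF.
rewrite /step; case H: (_ \in _); last by rewrite !mulr0.
by case: (step_src pF H) => [<-|/Hmid [] /negP //]; rewrite mulrA.
Qed.

Lemma sum_flflow_out u : \sum_(a : V) flflow L F u a =
  \sum_(p <- F) (L (pfirst p))%:R * p.1 * \sum_(a : V) step p u a.
Proof.
under eq_bigr do rewrite flflowE.
by rewrite exchange_big; apply: eq_bigr => p _; rewrite mulr_sumr.
Qed.

Lemma sum_flflow_in w : \sum_(u : V) flflow L F u w =
  \sum_(p <- F) (L (pfirst p))%:R * p.1 * \sum_(u : V) step p u w.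
Proof.
under eq_bigr do rewrite flflowE.
by rewrite exchange_big; apply: eq_bigr => p _; rewrite mulr_sumr.
Qed.

Lemma inflow_le_outflow w : w \notin S -> w \notin T ->
  \sum_(u : V) flflow L F u w <= \sum_(a : V) flflow L F w a.
Proof.
move=> wS wT; rewrite sum_flflow_in sum_flflow_out !big_seq; apply: ler_sum => p pF.
have [p0 _ _ _ _] := yflow_pathP pF.
by apply: ler_wpM2l; [rewrite mulr_ge0 ?ler0n ?ltW|exact: steps_in_le_out].
Qed.

Lemma fflow_out_of_source s : s \in S ->
  \sum_(a : V) fflow F s a = \sum_(p <- F | pfirst p == s) p.1.
Proof.
move=> sS; under eq_bigr do rewrite fflowE.
rewrite exchange_big [RHS]big_mkcond /= !big_seq; apply: eq_bigr => p pF.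
by rewrite -mulr_sumr steps_from_source //; case: eqP; rewrite ?mulr1 ?mulr0.
Qed.

Lemma fflow_into_sink t : t \in T ->
  \sum_(u : V) fflow F u t = \sum_(p <- F | plast p == t) p.1.
Proof.
move=> tT; under eq_bigr do rewrite fflowE.
rewrite exchange_big [RHS]big_mkcond /= !big_seq; apply: eq_bigr => p pF.
by rewrite -mulr_sumr steps_into_sink //; case: eqP; rewrite ?mulr1 ?mulr0.
Qed.

Lemma sum_by_source : \sum_(s in S) \sum_(p <- F | pfirst p == s) p.1 = \sum_(p <- F) p.1.
Proof.
under eq_bigr do rewrite big_mkcond /=.
rewrite exchange_big /= !big_seq; apply: eq_bigr => p pF.
have [_ pS _ _ _] := yflow_pathP pF.
rewrite (bigD1 (pfirst p)) //= eqxx big1 ?addr0 // => s /andP[_ ne].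
by rewrite eq_sym (negbTE ne).
Qed.

Lemma sum_by_sink : \sum_(t in T) \sum_(p <- F | plast p == t) p.1 = \sum_(p <- F) p.1.
Proof.
under eq_bigr do rewrite big_mkcond /=.
rewrite exchange_big /= !big_seq; apply: eq_bigr => p pF.
have [_ _ pT _ _] := yflow_pathP pF.
rewrite (bigD1 (plast p)) //= eqxx big1 ?addr0 // => t /andP[_ ne].
by rewrite eq_sym (negbTE ne).
Qed.

Lemma arc_head_saturated u w : farc F u w -> w \notin T -> y w = 1.
Proof.
move=> /hasP [p pF H] wT; have [_ _ pT _ Hmid] := yflow_pathP pF.
by case: (step_dst pF H) => [E|/Hmid [] //]; move: wT; rewrite E pT.
Qed.

Lemma farc_irrefl w : ~~ farc F w w.
Proof. by apply/negP => /acycF; rewrite connect0. Qed.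

(* The load routed through a non-source vertex u is at most L(u) y(u): either
   u is interior to some path, hence saturated, and the y-flow carries at most
   1 through it, or no path passes through u. *)
Lemma interior_load_le u : u \notin S ->
  (L u)%:R * \sum_(p <- F) p.1 * (count_mem u (pinterior p))%:R <= (L u)%:R * y u.
Proof.
move=> uS; case: (boolP (has (fun p => u \in pinterior p) F)) => [/hasP [p pF umid]|hn].
  have [_ _ _ _ Hmid] := yflow_pathP pF; have [_ uT y1 _] := Hmid u umid.
  rewrite y1; apply: ler_wpM2l; first exact: ler0n.
  by case: yflowF => _ _ _; apply.
have [yu0 _] := andP (y01 u).
rewrite big1_seq ?mulr0 ?mulr_ge0 ?ler0n // => p /andP[_ pF].
have /count_memPn -> : u \notin pinterior p.
  by apply/negP => H; move/hasP: hn; apply; exists p.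
by rewrite mulr0.
Qed.

Lemma outflow_le_capacity u : \sum_(a : V) flflow L F u a <= (L u)%:R * y u.
Proof.
rewrite sum_flflow_out; case: (boolP (u \in S)) => uS.
  apply: (@le_trans _ _ ((L u)%:R * \sum_(p <- F | pfirst p == u) p.1)); last first.
    by apply: ler_wpM2l; [exact: ler0n|case: yflowF => _ H _ _; apply: H].
  rewrite mulr_sumr [X in _ <= X]big_mkcond /= !big_seq; apply: ler_sum => p pF.
  by rewrite steps_from_source //; case: eqP => [->|_]; rewrite ?mulr1 ?mulr0 // mulrC.
apply: le_trans (interior_load_le uS); rewrite mulr_sumr !big_seq; apply: ler_sum => p pF.
have [p0 _ _ _ Hmid] := yflow_pathP pF.
apply: (@le_trans _ _ ((L (pfirst p))%:R * p.1 * (count_mem u (pinterior p))%:R)).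
  by apply: ler_wpM2l; [rewrite mulr_ge0 ?ler0n ?ltW|exact: steps_out_le_count].
case: (boolP (u \in pinterior p)) => [umid|/count_memPn ->]; last by rewrite !mulr0.
rewrite mulrA; apply: ler_wpM2r; first exact: ler0n.
by rewrite ler_pM2r // ler_nat; have [] := Hmid u umid.
Qed.

End YFlow.

Section ScaledInequalities.
Variable R : realFieldType.
Implicit Types X O M a : R.

Lemma ratio_le1 a M : 0 <= a <= M -> a / M <= 1.
Proof.
case/andP=> a0 aM; have [->|nz] := eqVneq M 0; first by rewrite invr0 mulr0 ler01.
by rewrite ler_pdivrMr ?mul1r // lt_def nz (le_trans a0 aM).
Qed.

Lemma sub_scaled_le X O M : 0 <= X <= M -> 0 <= O <= M -> X - X * O / M <= M - O.
Proof.
move=> /andP[X0 XM] /andP[O0 OM]; have [M0|nz] := eqVneq M 0.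
  have -> : X = 0 by apply/eqP; rewrite eq_le X0 andbT -M0.
  have -> : O = 0 by apply/eqP; rewrite eq_le O0 andbT -M0.
  by rewrite M0 !mul0r subr0.
have Mp : 0 < M by rewrite lt_def nz (le_trans X0 XM).
rewrite -subr_ge0; have -> : M - O - (X - X * O / M) = (M - X) * (M - O) / M by field.
by apply: divr_ge0; [apply: mulr_ge0; rewrite subr_ge0|exact: ltW].
Qed.

Lemma sub_scaled_ge0 X O M : 0 <= X -> 0 <= O <= M -> 0 <= X - X * O / M.
Proof.
move=> X0 OM; rewrite subr_ge0 -mulrA.
by rewrite -[X in _ <= X]mulr1 ler_wpM2l // ratio_le1.
Qed.

Lemma scaled_le X M a : 0 <= X <= M -> 0 <= a -> X * a / M <= a.
Proof.
move=> XM a0; rewrite mulrAC -[X in _ <= X]mul1r; apply: ler_wpM2r => //.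
exact: ratio_le1.
Qed.

End ScaledInequalities.

Lemma radius_ge (V : finType) (e : rel V) (R : realFieldType) (x : V -> V -> R) u w b :
  0 < x u w -> dist e w u = Some b -> (b <= radius e x u)%N.
Proof.
move=> xp E; have := @leq_bigmax_cond _ (fun w' => (0 < x u w') && (dist e w' u != None))
  (fun w' => odflt 0%N (dist e w' u)) w.
by rewrite E xp; apply.
Qed.

Section ChainShift.
Variables (V : finType) (e : rel V) (R : realFieldType)
  (L : V -> nat) (k delta : nat) (x : V -> V -> R) (y : V -> R)
  (S T : {set V}) (F : seq (flowpath V R)).
Hypothesis esym : symmetric e.
Hypothesis disST : [disjoint S & T].
Hypothesis feasxy : feasible e L k (Some delta) x y.
Hypothesis yflowF : is_yflow L y S T F.
Hypothesis acycF : facyclic F.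

Let x' := cs_x L x y F.
Let y' := cs_y y S T F.
Let fl := flflow L F.
Let f := fflow F.
Let cap u := (L u)%:R * y u.
Let out u := \sum_(a : V) fl u a.
Let load u := \sum_(v : V) x u v.

Lemma y01 u : 0 <= y u <= 1. Proof. by case: feasxy => _ _ _ _ []. Qed.
Lemma x_ge0 u v : 0 <= x u v. Proof. by case: feasxy => _ _ _ _ [] _ _ ->. Qed.
Lemma x_le_y u v : x u v <= y u. Proof. by case: feasxy => _ H _ _ _; apply: H. Qed.
Lemma load_le_cap u : load u <= cap u. Proof. by case: feasxy => _ _ H _ _; apply: H. Qed.
Lemma column_sum v : \sum_(u : V) x u v = 1. Proof. by case: feasxy => _ _ _ H _; apply: H. Qed.
Lemma x_far u v : ext_gt (dist e u v) (Some delta) -> x u v = 0.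
Proof. by case: feasxy => _ _ _ _ [] _ H _; apply: H. Qed.

Lemma cap_ge0 u : 0 <= cap u.
Proof. by rewrite mulr_ge0 ?ler0n //; case/andP: (y01 u). Qed.
Lemma fl_ge0 u w : 0 <= fl u w. Proof. exact: flflow_ge0 yflowF u w. Qed.
Lemma f_ge0 u w : 0 <= f u w. Proof. exact: fflow_ge0 yflowF u w. Qed.
Lemma out_ge0 u : 0 <= out u. Proof. by apply: sumr_ge0 => a _; apply: fl_ge0. Qed.
Lemma out_le_cap u : out u <= cap u. Proof. exact: outflow_le_capacity disST yflowF acycF y01 u. Qed.
Lemma fl_le_out u w : fl u w <= out u.
Proof. by rewrite /out (bigD1 w) //= lerDl; apply: sumr_ge0 => a _; exact: fl_ge0. Qed.
Lemma load_ge0 u : 0 <= load u. Proof. by apply: sumr_ge0 => v _; apply: x_ge0. Qed.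
Lemma x_le_load u v : x u v <= load u.
Proof. by rewrite /load (bigD1 v) //= lerDl; apply: sumr_ge0 => a _; exact: x_ge0. Qed.

Lemma cs_xE w v : x' w v = x w v + \sum_(u : V) x u v * fl u w / cap u - x w v * out w / cap w.
Proof.
rewrite /x' /cs_x; congr (_ + _ - _).
  rewrite big_mkcond; apply: eq_bigr => u _; case: ifP => // /negbT nf.
  by rewrite /fl flflow_off_arc // mulr0 mul0r.
rewrite big_mkcond /out /cap mulr_sumr mulr_suml; apply: eq_bigr => a _.
by case: ifP => // /negbT nf; rewrite /fl flflow_off_arc // mulr0 mul0r.
Qed.

(* Condition (7): a vertex passes on at most all of what it holds. *)
Lemma cs_x_ge0 w v : 0 <= x' w v.
Proof.
rewrite cs_xE addrAC addr_ge0 //; last first.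
  by apply: sumr_ge0 => u _; apply: divr_ge0; [apply: mulr_ge0|]; rewrite ?x_ge0 ?fl_ge0 ?cap_ge0.
by rewrite -mulrA mulrA sub_scaled_ge0 ?x_ge0 // out_ge0 out_le_cap.
Qed.

(* Condition (4).  Every client keeps total assignment 1: what w passes on, its out-neighbours receive. *)
Lemma cs_x_column v : \sum_(u : V) x' u v = 1.
Proof.
under eq_bigr do rewrite cs_xE.
rewrite sumrB big_split /= exchange_big /=.
have -> : \sum_(j : V) \sum_(i : V) x j v * fl j i / cap j = \sum_(u : V) x u v * out u / cap u.
  by apply: eq_bigr => a _; rewrite /out -mulr_suml -mulr_sumr.
by rewrite addrK column_sum.
Qed.

Lemma cs_x_zero w v : x w v = 0 -> (forall u, farc F u w -> x u v = 0) -> x' w v = 0.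
Proof.
move=> xw xu; rewrite cs_xE xw !mul0r subr0 add0r.
apply: big1 => u _; have [/xu ->|nf] := boolP (farc F u w); first by rewrite !mul0r.
by rewrite /fl flflow_off_arc // mulr0 mul0r.
Qed.

Lemma cs_x_pos w v : 0 < x' w v ->
  0 < x w v \/ exists2 u, farc F u w & 0 < x u v.
Proof.
move=> pos; have [xw|xw] := ltP 0 (x w v); first by left.
right; apply/exists_inP; apply: contraLR pos => /exists_inPn nu.
rewrite -leNgt le_eqVlt cs_x_zero ?eqxx //; first by apply/eqP; rewrite eq_le xw x_ge0.
by move=> u /nu; rewrite -leNgt => xu; apply/eqP; rewrite eq_le xu x_ge0.
Qed.

Let srcout s := \sum_(u : V) f s u.
Let sinkin t := \sum_(u : V) f u t.

Lemma srcout_range s : s \in S -> 0 <= srcout s <= y s.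
Proof.
move=> sS; rewrite sumr_ge0 /=; last by move=> a _; apply: f_ge0.
rewrite /srcout /f (fflow_out_of_source disST yflowF acycF sS).
by case: yflowF => _ H _ _; apply: H.
Qed.

Lemma sinkin_range t : t \in T -> 0 <= sinkin t <= 1 - y t.
Proof.
move=> tT; rewrite sumr_ge0 /=; last by move=> a _; apply: f_ge0.
rewrite /sinkin /f (fflow_into_sink disST yflowF acycF tT).
by case: yflowF => _ _ H _; apply: H.
Qed.

Lemma cs_yE t : y' t =
  if t \in S then y t - srcout t else if t \in T then y t + sinkin t else y t.
Proof.
rewrite /y' /cs_y /srcout /sinkin /f; case: ifP => _.
  congr (_ - _); rewrite big_mkcond; apply: eq_bigr => u _.
  by case: ifP => // /negbT nf; rewrite fflow_off_arc.
case: ifP => _ //; congr (_ + _); rewrite big_mkcond; apply: eq_bigr => u _.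
by case: ifP => // /negbT nf; rewrite fflow_off_arc.
Qed.

(* Condition (1).  The mass leaving S is the mass entering T, so sum_u y'(u) = sum_u y(u) = k. *)
Lemma cs_y_total : \sum_(u : V) y' u = k%:R.
Proof.
have E t : y' t = y t - (if t \in S then srcout t else 0) + (if t \in T then sinkin t else 0).
  rewrite cs_yE; case: ifP => tS; first by rewrite (disjointFr disST tS) addr0.
  by case: ifP => tT; rewrite subr0 ?addr0.
under eq_bigr do rewrite E.
rewrite big_split sumrB /= -!big_mkcond /=.
have -> : \sum_(s in S) srcout s = \sum_(s in S) \sum_(p <- F | pfirst p == s) p.1.
  by apply: eq_bigr => s sS; rewrite /srcout /f (fflow_out_of_source disST yflowF acycF sS).
have -> : \sum_(t in T) sinkin t = \sum_(t in T) \sum_(p <- F | plast p == t) p.1.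
  by apply: eq_bigr => t tT; rewrite /sinkin /f (fflow_into_sink disST yflowF acycF tT).
by rewrite (sum_by_source yflowF) (sum_by_sink yflowF) subrK; case: feasxy.
Qed.

(* Condition (5): a source sends at most y(s), a sink receives at most 1 - y(t). *)
Lemma cs_y_range u : 0 <= y' u <= 1.
Proof.
have /andP[y0 y1] := y01 u; rewrite cs_yE; case: ifP => uS.
  have /andP[O0 Oy] := srcout_range uS.
  by rewrite subr_ge0 Oy /= (le_trans _ y1) // lerBlDr lerDl.
case: ifP => uT; last exact: y01.
have /andP[I0 I1] := sinkin_range uT.
by rewrite addr_ge0 //= -lerBrDl.
Qed.

Lemma out_source s : s \in S -> out s = (L s)%:R * srcout s.
Proof.
move=> sS; rewrite /out /srcout mulr_sumr; apply: eq_bigr => a _.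
by rewrite /fl /f (flflow_out_of_source disST yflowF acycF a sS).
Qed.

Lemma out_sink t : t \in T -> out t = 0.
Proof.
by move=> tT; rewrite /out big1 // => a _; rewrite /fl (flflow_out_of_sink disST yflowF acycF a tT).
Qed.

Lemma no_inflow_source s (G : V -> R) : s \in S -> \sum_(u : V) G u * fl u s / cap u = 0.
Proof.
move=> sS; rewrite big1 // => u _.
by rewrite /fl (flflow_into_source disST yflowF acycF u sS) mulr0 mul0r.
Qed.

Lemma share_into_sink_le u v t : t \in T -> x u v * fl u t / cap u <= f u t.
Proof.
move=> tT; have [->|nz] := eqVneq (cap u) 0; first by rewrite invr0 mulr0 f_ge0.
rewrite ler_pdivrMr ?lt_def ?nz ?cap_ge0 //.
apply: (@le_trans _ _ (y u * ((L u)%:R * f u t))).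
  apply: ler_pM; rewrite ?x_ge0 ?fl_ge0 ?x_le_y //.
  by rewrite /fl /f (flflow_le disST yflowF acycF u t).
by rewrite [X in _ <= X]mulrC /cap mulrCA mulrA.
Qed.

Lemma x_Lzero w v : L w = 0%N -> x w v = 0.
Proof.
move=> L0; apply/eqP; rewrite eq_le x_ge0 andbT.
by apply: le_trans (x_le_load w v) (le_trans (load_le_cap w) _); rewrite /cap L0 mul0r.
Qed.

Lemma cs_x_le_cs_y w v : x' w v <= y' w.
Proof.
rewrite cs_xE cs_yE; case: ifP => wS.
  rewrite no_inflow_source // addr0 out_source //.
  have /andP[O0 Oy] := srcout_range wS.
  have [L0|Lnz] := eqVneq (L w) 0%N.
    by rewrite x_Lzero // !mul0r subr0 subr_ge0.
  rewrite /cap -mulrA -mulf_div divff ?mul1r ?pnatr_eq0 // mulrA.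
  by apply: sub_scaled_le; rewrite ?x_ge0 ?x_le_y ?O0.
case: ifP => wT.
  rewrite out_sink // mulr0 mul0r subr0 /sinkin; apply: lerD; first exact: x_le_y.
  by apply: ler_sum => u _; apply: share_into_sink_le.
apply: (@le_trans _ _ (x w v + \sum_(u : V) x u v * fl u w / cap u)).
  rewrite lerBlDr lerDl -mulrA mulrA; apply: divr_ge0; last exact: cap_ge0.
  by apply: mulr_ge0; [exact: x_ge0|exact: out_ge0].
have [u0 fu0|na] := pickP (fun u => farc F u w); last first.
  rewrite big1 ?addr0; first exact: x_le_y.
  by move=> u _; rewrite /fl flflow_off_arc ?na // mulr0 mul0r.
(* w is a saturated internal vertex: bound by the column sum of x *)
rewrite (arc_head_saturated disST yflowF acycF fu0 (negbT wT)) -(column_sum v).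
rewrite [X in _ <= X](bigD1 w) //= (bigD1 w) //= /fl flflow_off_arc.
  rewrite mulr0 mul0r add0r lerD2l; apply: ler_sum => u _; rewrite -mulrA.
  apply: ler_piMr; first exact: x_ge0.
  by apply: ratio_le1; rewrite fl_ge0 (le_trans (fl_le_out _ _) (out_le_cap _)).
exact: farc_irrefl acycF w.
Qed.

Lemma cs_x_rowE w : \sum_(v : V) x' w v =
  load w + \sum_(u : V) load u * fl u w / cap u - load w * out w / cap w.
Proof.
under eq_bigr do rewrite cs_xE.
rewrite sumrB big_split /= exchange_big /=.
by congr (_ + _ - _); rewrite /load -?mulr_suml //; apply: eq_bigr => u _; rewrite -!mulr_suml.
Qed.

Lemma cs_x_row_le w : \sum_(v : V) x' w v <= (L w)%:R * y' w.
Proof.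
have Xw : 0 <= load w <= cap w by rewrite load_ge0 load_le_cap.
have share_le u : load u * fl u w / cap u <= fl u w.
  by apply: scaled_le; rewrite ?load_ge0 ?load_le_cap ?fl_ge0.
rewrite cs_x_rowE cs_yE; case: ifP => wS.
  rewrite no_inflow_source // addr0 out_source // mulrBr.
  have /andP[O0 Oy] := srcout_range wS.
  by apply: sub_scaled_le; rewrite ?mulr_ge0 ?ler0n //= ler_wpM2l ?ler0n.
case: ifP => wT.
  rewrite out_sink // mulr0 mul0r subr0 mulrDr /sinkin mulr_sumr.
  apply: lerD; first exact: load_le_cap.
  apply: ler_sum => u _; apply: le_trans (share_le u) _.
  by rewrite /fl (flflow_into_sink_le disST yflowF acycF u wT).
apply: (@le_trans _ _ (load w - load w * out w / cap w + out w)); last first.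
  by rewrite -lerBrDr; apply: sub_scaled_le; rewrite ?out_ge0 ?out_le_cap.
rewrite addrAC lerD2l.
apply: le_trans (inflow_le_outflow disST yflowF acycF (negbT wS) (negbT wT)).
by apply: ler_sum => u _; apply: share_le.
Qed.

Lemma cs_y_internal v : v \notin S -> v \notin T -> y' v = y v.
Proof. by move=> vS vT; rewrite cs_yE (negbTE vS) (negbTE vT). Qed.

Lemma cs_x_far w v : ext_gt (dist e w v) (eadd delta (dmax e F)) -> x' w v = 0.
Proof.
rewrite /dmax; case: ifP => [/forallP arcs_finite|//].
set D := (\max_(uw | _) _)%N => /= far.
apply: cs_x_zero => [|u fu].
  by apply: x_far; move: far; rewrite /ext_gt; case: (dist e w v) => // n; lia.
have /forallP/(_ w)/implyP/(_ fu) := arcs_finite u.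
case Euw: (dist e u w) => [a|] // _.
have aD : (a <= D)%N.
  have := @leq_bigmax_cond _ (fun uw : V * V => farc F uw.1 uw.2)
    (fun uw : V * V => odflt 0%N (dist e uw.1 uw.2)) (u, w) fu.
  by rewrite /= Euw.
apply: x_far; rewrite /ext_gt; case Euv: (dist e u v) => [b|] //.
rewrite ltnNge; apply/negP => bd.
have Ewu : dist e w u = Some a by rewrite (dist_sym esym).
have [c [Ec cle]] := dist_tri Ewu Euv.
by move: far; rewrite Ec /=; lia.
Qed.

Lemma feasible_cs : feasible e L k (eadd delta (dmax e F)) x' y'.
Proof.
split; [exact: cs_y_total|exact: cs_x_le_cs_y|exact: cs_x_row_le|exact: cs_x_column|].
by split; [exact: cs_y_range|exact: cs_x_far|exact: cs_x_ge0].
Qed.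

(* Without in-arcs, v only loses clients. *)
Lemma radius_no_inarc v : (forall a, ~~ farc F a v) -> (radius e x' v <= radius e x v)%N.
Proof.
move=> na; apply/bigmax_leqP => w /andP [pos nd].
have [xp|[u fu _]] := cs_x_pos pos; last by move: (na u); rewrite fu.
by case Ewv: (dist e w v) nd => [n|] // _; exact: radius_ge xp Ewv.
Qed.

(* A client w newly served by v comes from an in-neighbour u, and
   dist(w,v) <= dist(w,u) + dist(u,v) <= radius(u) + dist(u,v). *)
Lemma radius_inarc v : ole (radius e x' v) (rbound e x F v).
Proof.
rewrite /rbound; case: ifP => [/forallP arcs_finite|//] /=.
apply/bigmax_leqP => w /andP [pos nd].
case Ewv: (dist e w v) nd => [n|] // _ /=.
have [xp|[u fu xu]] := cs_x_pos pos.
  by apply: leq_trans (leq_maxl _ _); exact: radius_ge xp Ewv.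
apply: leq_trans (leq_maxr _ _).
case Euw: (dist e u w) => [b|]; last by move: xu; rewrite x_far ?ltxx // /ext_gt Euw.
have /implyP/(_ fu) := arcs_finite u; case Euv: (dist e u v) => [a|] // _.
have Ewu : dist e w u = Some b by rewrite (dist_sym esym).
have [c [Ec cle]] := dist_tri Ewu Euv.
move: Ewv; rewrite Ec => -[<-].
apply: (leq_trans cle); apply: leq_trans (leq_add (radius_ge xu Ewu) (leqnn a)) _.
have := @leq_bigmax_cond _ (fun a => farc F a v)
  (fun a => radius e x a + odflt 0%N (dist e a v))%N u fu.
by rewrite Euv.
Qed.

End ChainShift.

Theorem mainTheorem12 (V : finType) (e : rel V) (R : realFieldType)
  (L : V -> nat) (k delta : nat) (x : V -> V -> R) (y : V -> R)
  (S T : {set V}) (F : seq (flowpath V R)) :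
  symmetric e -> irreflexive e -> (0 < k)%N -> [disjoint S & T] ->
  feasible e L k (Some delta) x y ->
  is_yflow L y S T F -> facyclic F ->
  let x' := cs_x L x y F in
  let y' := cs_y y S T F in
  [/\ feasible e L k (eadd delta (dmax e F)) x' y',
      forall v, (forall a, ~~ farc F a v) -> (radius e x' v <= radius e x v)%N,
      forall v, (exists a, farc F a v) -> ole (radius e x' v) (rbound e x F v) &
      forall v, v \notin S -> v \notin T -> y' v = y v].
Proof.
move=> esym _ _ disST feasxy yflowF acycF x' y'; split.
- exact: feasible_cs esym disST feasxy yflowF acycF.
- exact: radius_no_inarc feasxy.
- by move=> v _; exact: radius_inarc F esym feasxy v.
- exact: cs_y_internal.
Qed.
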